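(* Fix a client $k$, an iteration $t$ and a constant $\kappa>0$, and suppose $\texttt{EI}_k^{(t)}(\bm{x}_k^{(t)\mathrm{new}})\ge\kappa$ and $\sigma_k^{(t)}(\bm{x})\le 1$ for all $\bm{x}$. Let $C=\log\left[\frac{1}{2\pi\kappa^2}\right]$. If $y_k^{*(t)}-\mu_k^{(t)}(\bm{x}_k^{(t)\mathrm{new}})\ge 0$, then $y_k^{*(t)}-\mu_k^{(t)}(\bm{x}_k^{(t)\mathrm{new}})\le\sigma_k^{(t)}(\bm{x}_k^{(t)\mathrm{new}})\sqrt{C}$. Furthermore, $\tau(-z_k^{(t)}(\bm{x}_k^{(t)\mathrm{new}}))\le 1+\sqrt{C}$.
   Context: Client $k$ has noisy data with responses $\bm{y}_k^{(t)}$ at iteration $t$, $y_k^{*(t)}=\max\bm{y}_k^{(t)}$, and $\mu_k^{(t)},\sigma_k^{(t)}>0$ are Gaussian-process posterior mean and standard deviation. $z_k^{(t)}(\bm{x})=\frac{\mu_k^{(t)}(\bm{x})-y_k^{*(t)}}{\sigma_k^{(t)}(\bm{x})}$, $\tau(z)=z\Phi(z)+\phi(z)$ with $\phi,\Phi$ the standard normal pdf and cdf, and $\texttt{EI}_k^{(t)}(\bm{x})=\sigma_k^{(t)}(\bm{x})\tau(z_k^{(t)}(\bm{x}))$ is the expected improvement. $\bm{x}_k^{(t)\mathrm{new}}$ is any design point (in the paper, the consensus design of client $k$ at iteration $t$). The algorithm stops at iteration $t$ if the expected improvement falls below $\kappa$, so the hypothesis $\texttt{EI}_k^{(t)}(\bm{x}_k^{(t)\mathrm{new}})\ge\kappa$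 means the algorithm has not stopped. *)

From HB Require Import structures.
From mathcomp Require Import all_boot all_order all_algebra.
From mathcomp Require Import all_classical all_reals all_analysis.
Set Implicit Arguments. Unset Strict Implicit. Unset Printing Implicit Defensive.
Import Order.TTheory GRing.Theory Num.Theory.
Local Open Scope classical_set_scope.
Local Open Scope ring_scope.

Definition std_phi {R : realType} (z : R) : R := normal_pdf 0 1 z.
Definition std_Phi {R : realType} (z : R) : R :=
  fine (normal_prob (0:R) 1 `]-oo, z]).

Definition tau {R : realType} (z : R) : R := z * std_Phi z + std_phi z.

Definition ystar {R : realType} (n : nat) (y : 'I_(n.+1) -> R) : R :=
  \big[Num.max/y ord0]_(i < n.+1) y i.

Definition zscore {R : realType} {X : Type} (mu sigma : X -> R) (ys : R) (x : X) : R :=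
  (mu x - ys) / sigma x.

Definition EI {R : realType} {X : Type} (mu sigma : X -> R) (ys : R) (x : X) : R :=
  sigma x * tau (zscore mu sigma ys x).

From HB Require Import structures.
From mathcomp Require Import all_boot all_order all_algebra.
From mathcomp Require Import all_classical all_reals all_analysis.
From mathcomp Require Import lra.
Import Order.TTheory GRing.Theory Num.Theory.
Local Open Scope ring_scope.

(* Since 0 <= Phi <= 1, tau w <= phi w for w <= 0 and tau w <= max(w, 0) + 1
   everywhere.  For z := z(x_new) <= 0 the hypotheses give
   kappa <= sigma tau(z) <= phi(z) = exp(-z^2/2) / sqrt(2 pi), which inverts to
   z^2 <= C.  Hence max(-z, 0) <= sqrt C in all cases, and both claims follow. *)

Section StandardNormal.
Context {R : realType}.
Implicit Types w k : R.

Lemma std_Phi_ge0 w : 0 <= std_Phi w.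
Proof. by rewrite /std_Phi fine_ge0 // measure_ge0. Qed.

Lemma std_Phi_le1 w : std_Phi w <= 1.
Proof.
rewrite /std_Phi; set F := normal_prob _ _ _.
have : (F <= 1)%E by apply: probability_le1.
by case: F => [r | |] //=; rewrite lee_fin.
Qed.

Lemma std_phiE w : std_phi w = (Num.sqrt (pi *+ 2))^-1 * expR (- w ^+ 2 / 2).
Proof.
by rewrite /std_phi normal_pdfE ?oner_neq0 // /normal_peak /normal_fun expr1n mul1r subr0.
Qed.

Lemma two_pi_ge1 : 1 <= pi *+ 2 :> R.
Proof. by have := @pi_ge2 R; rewrite mulr2n; lra. Qed.

Lemma std_phi_ge0 w : 0 <= std_phi w.
Proof. by rewrite std_phiE mulr_ge0 ?expR_ge0 // invr_ge0 sqrtr_ge0. Qed.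

Lemma std_phi_le1 w : std_phi w <= 1.
Proof.
have sqrt_ge1 : 1 <= Num.sqrt (pi *+ 2 : R).
  by rewrite -sqrtr1 ler_sqrt ?two_pi_ge1 ?(le_trans ler01 two_pi_ge1).
rewrite std_phiE -[1]mul1r ler_pM ?invr_ge0 ?sqrtr_ge0 ?expR_ge0 //.
  by rewrite invf_le1 // (lt_le_trans ltr01).
by rewrite expR_le1 mulr_le0_ge0 ?oppr_le0 ?sqr_ge0 ?invr_ge0 ?ler0n.
Qed.

Lemma std_phi_sqr w : std_phi w ^+ 2 = expR (- w ^+ 2) / (2 * pi).
Proof.
have pi2_ge0 : 0 <= pi *+ 2 :> R by rewrite (le_trans ler01) ?two_pi_ge1.
rewrite std_phiE exprMn exprVn sqr_sqrtr // -expRM_natr mulrC.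
by congr (expR _ / _); [lra | rewrite mulr2n; lra].
Qed.

Lemma sqr_le_ln_of_std_phi_ge w k :
  0 < k -> k <= std_phi w -> w ^+ 2 <= ln (1 / (2 * pi * k ^+ 2)).
Proof.
move=> k_gt0 k_le_phi.
have two_pi_gt0 : 0 < 2 * pi :> R by rewrite mulr_gt0 ?pi_gt0.
have k2_le : 2 * pi * k ^+ 2 <= expR (- w ^+ 2).
  rewrite mulrC -ler_pdivlMr // -std_phi_sqr.
  by rewrite !expr2 ler_pM // ltW.
have k2_gt0 : 0 < 2 * pi * k ^+ 2 by rewrite mulr_gt0 ?exprn_gt0.
have : ln (2 * pi * k ^+ 2) <= - w ^+ 2.
  by rewrite -[- w ^+ 2]expRK ler_ln ?posrE ?expR_gt0.
by rewrite div1r lnV ?posrE //; lra.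
Qed.

Lemma tau_le_std_phi w : w <= 0 -> tau w <= std_phi w.
Proof. by move=> w_le0; rewrite /tau gerDr mulr_le0_ge0 ?std_Phi_ge0. Qed.

Lemma tau_le_max_add1 w : tau w <= Num.max w 0 + 1.
Proof.
rewrite /tau lerD ?std_phi_le1 //.
have := std_Phi_ge0 w; have := std_Phi_le1 w.
case: (leP w 0) => [w_le0 | w_gt0] Phi_le1 Phi_ge0.
  exact: mulr_le0_ge0.
by rewrite ler_piMr // ltW.
Qed.

End StandardNormal.

Theorem lemma3 (R : realType) (X : Type) (n : nat) (y : 'I_(n.+1) -> R)
    (mu sigma : X -> R) (xnew : X) (kappa : R)
    (hsig_pos : forall x, 0 < sigma x)
    (hsig_le1 : forall x, sigma x <= 1)
    (hkappa : 0 < kappa)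
    (hEI : kappa <= EI mu sigma (ystar y) xnew) :
  let C := ln (1 / (2 * pi * kappa ^+ 2)) in
  (0 <= ystar y - mu xnew ->
     ystar y - mu xnew <= sigma xnew * Num.sqrt C) /\
  tau (- zscore mu sigma (ystar y) xnew) <= 1 + Num.sqrt C.
Proof.
move=> C; have s_gt0 := hsig_pos xnew; have s_le1 := hsig_le1 xnew.
move: hEI; rewrite /EI; set s := sigma xnew; set z := zscore _ _ _ _ => hEI.
have zE : z = - (ystar y - mu xnew) / s by rewrite /z /zscore opprB.
have z_bound : Num.max (- z) 0 <= Num.sqrt C.
  case: (leP z 0) => [z_le0 | z_gt0]; last first.
    by rewrite max_r ?sqrtr_ge0 // oppr_le0 ltW.
  have kappa_le_phi : kappa <= std_phi z.
    apply: (le_trans hEI); apply: (le_trans (y := s * std_phi z)).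
      by rewrite ler_pM2l // tau_le_std_phi.
    by rewrite ler_piMl ?std_phi_ge0.
  have z2_le := sqr_le_ln_of_std_phi_ge _ _ hkappa kappa_le_phi.
  rewrite max_l ?oppr_ge0 // -(ler0_norm z_le0) -sqrtr_sqr ler_sqrt //.
  exact: le_trans (sqr_ge0 z) z2_le.
split.
  move=> gap_ge0.
  have mzE : - z = (ystar y - mu xnew) / s by rewrite zE mulNr opprK.
  have mz_ge0 : 0 <= - z by rewrite mzE divr_ge0 // ltW.
  by move: z_bound; rewrite max_l // mzE ler_pdivrMr // mulrC.
by apply: (le_trans (tau_le_max_add1 _)); rewrite addrC lerD2l.
Qed.
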